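(* For all positive integers $n$ and $k$, $$\sum_{i=1}^{k}(-1)^i\binom{ni+k-1}{k}\binom{k+1}{i+1}=(-1)^k\binom{n}{k}.$$
   Context: Binomial coefficients $\binom{m}{j}$ for nonnegative integers $m,j$ are the usual ones, with $\binom{m}{j}=0$ when $j>m$. *)

From mathcomp Require Import all_boot all_order all_algebra.

(* The polynomial Q(x) = prod_(t < k) (n (x - 1) + t) has degree k, so its
   (k+1)-st finite difference vanishes:
   sum_(j <= k+1) (-1)^j C(k+1, j) Q(j) = 0.
   Here Q(0) = (-1)^k k! C(n, k), Q(1) = 0 because of the factor t = 0, and
   Q(i + 1) = k! C(n i + k - 1, k) for i >= 1; dividing by k! gives the identity. *)
From mathcomp Require Import all_boot all_order all_algebra zify ring.
Import GRing.Theory.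

Lemma prod_rising a k : 0 < a -> \prod_(t < k) (a + t) = (a + k - 1) ^_ k.
Proof.
elim: k a => [|k IHk] a a_gt0; first by rewrite big_ord0 ffactn0.
rewrite big_ord_recl addn0.
under eq_bigr => t _ do rewrite /bump /= addnS -addSn.
rewrite IHk // ffactnSr mulnC.
by congr (_ ^_ _ * _); lia.
Qed.

Local Open Scope ring_scope.

Lemma prod_subz_ffact n k : \prod_(t < k) (n%:Z - t%:Z) = (n ^_ k)%N%:Z.
Proof.
elim: k => [|k IHk]; first by rewrite big_ord0 ffactn0.
rewrite big_ord_recr /= IHk ffactnSr PoszM.
have [le_kn | lt_nk] := leqP k n; first by rewrite subzn.
by rewrite ffact_small // mul0r.
Qed.

Section AlternatingBinomialSum.

Variable R : comNzRingType.

Definition alt_binomial_sum (m : nat) (f : nat -> R) : R :=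
  \sum_(0 <= j < m.+1) (-1) ^+ j * 'C(m, j)%:R * f j.

Lemma alt_binomial_sumS m f :
  alt_binomial_sum m.+1 f = alt_binomial_sum m f - alt_binomial_sum m (f \o succn).
Proof.
rewrite /alt_binomial_sum big_nat_recl // bin0.
under eq_bigr => j _ do rewrite binS natrD mulrDr mulrDl.
rewrite big_split addrA; congr (_ + _).
  rewrite [in RHS]big_nat_recl // big_nat_recr //=.
  by rewrite bin0 bin_small // mulr0 mul0r addr0.
rewrite -[RHS]mulN1r big_distrr; apply: eq_bigr => j _ /=.
by rewrite exprS !mulrA.
Qed.

Lemma alt_binomial_sum_lincomb m N (c : nat -> R) (g : nat -> nat -> R) f :
  (forall j, f j = \sum_(e < N) c e * g e j) ->
  alt_binomial_sum m f = \sum_(e < N) c e * alt_binomial_sum m (g e).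
Proof.
move=> f_lincomb; rewrite /alt_binomial_sum.
under eq_bigr => j _ do rewrite f_lincomb big_distrr.
rewrite exchange_big; apply: eq_bigr => e _.
by rewrite big_distrr; apply: eq_bigr => j _ /=; rewrite mulrCA.
Qed.

Lemma alt_binomial_sum_expr m d :
  (d < m)%N -> alt_binomial_sum m (fun j => j%:R ^+ d) = 0.
Proof.
elim: m d => [|m IHm] d // lt_dm.
rewrite alt_binomial_sumS [X in _ - X](alt_binomial_sum_lincomb _ d.+1
  (fun e => 'C(d, e)%:R) (fun e j => j%:R ^+ e)) => [|j]; last first.
  by rewrite /= -addn1 natrD exprD1n; apply: eq_bigr => e _; rewrite mulr_natl.
rewrite big_ord_recr big1 => [|e _]; last first.
  by rewrite IHm ?mulr0 // (leq_trans (ltn_ord e)).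
by rewrite /= add0r binn mul1r subrr.
Qed.

Lemma alt_binomial_sum_poly m (p : {poly R}) :
  (size p <= m)%N -> alt_binomial_sum m (fun j => p.[j%:R]) = 0.
Proof.
move=> le_pm.
rewrite (alt_binomial_sum_lincomb _ (size p) (fun i => p`_i)
  (fun i j => j%:R ^+ i)) => [|j]; last exact: horner_coef.
rewrite big1 // => i _.
by rewrite alt_binomial_sum_expr ?mulr0 // (leq_trans (ltn_ord i)).
Qed.

End AlternatingBinomialSum.

Section ShiftedRisingPoly.

Variables n k : nat.
Hypothesis n_gt0 : (0 < n)%N.

Definition shifted_rising_poly : {poly int} :=
  \prod_(t < k) ((n%:Z)%:P * 'X + (t%:Z - n%:Z)%:P).

Local Notation Q := shifted_rising_poly.

Lemma horner_shifted_rising x :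
  Q.[x] = \prod_(t < k) (n%:Z * x + (t%:Z - n%:Z)).
Proof. by rewrite horner_prod; apply: eq_bigr => t _; rewrite !hornerE. Qed.

Lemma size_shifted_rising : size Q = k.+1.
Proof.
have size_factor (t : 'I_k) : size ((n%:Z)%:P * 'X + (t%:Z - n%:Z)%:P) = 2%N.
  by rewrite size_MXaddC polyC_eq0 size_polyC eqz_nat eqn0Ngt n_gt0.
rewrite /shifted_rising_poly size_prod => [|t _]; last first.
  by rewrite -size_poly_eq0 size_factor.
under eq_bigr => t _ do rewrite size_factor.
by rewrite sum_nat_const card_ord; lia.
Qed.

Lemma shifted_rising_at0 : Q.[0] = (-1) ^+ k * (k`! * 'C(n, k))%N%:Z.
Proof.
rewrite horner_shifted_rising.
under eq_bigr => t _ do rewrite mulr0 add0r -opprB -mulN1r.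
by rewrite big_split prod_subz_ffact prodr_const card_ord mulnC bin_ffact.
Qed.

Lemma shifted_rising_at1 : (0 < k)%N -> Q.[1] = 0.
Proof.
rewrite horner_shifted_rising; case: k => // k' _.
by rewrite big_ord_recl mulr1 add0r subrr mul0r.
Qed.

Lemma shifted_rising_atS i :
  Q.[i.+2%:Z] = (k`! * 'C(n * i.+1 + k - 1, k))%N%:Z.
Proof.
rewrite horner_shifted_rising.
transitivity (\prod_(t < k) (n * i.+1 + t)%N%:Z).
  by apply: eq_bigr => t _; rewrite PoszD PoszM; ring.
rewrite -(big_morph _ PoszM (erefl 1%:Z)) prod_rising ?muln_gt0 ?n_gt0 //.
by rewrite -bin_ffact mulnC.
Qed.

End ShiftedRisingPoly.

Theorem mainTheorem8 (n k : nat) (hn : (0 < n)%N) (hk : (0 < k)%N) :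
  \sum_(1 <= i < k.+1) (-1) ^+ i * ('C(n * i + k - 1, k))%:Z * ('C(k.+1, i.+1))%:Z
  = (-1) ^+ k * ('C(n, k))%:Z :> int.
Proof.
have := alt_binomial_sum_poly _ _ _ (eq_leq (size_shifted_rising n k hn)).
rewrite /alt_binomial_sum big_nat_recl // big_nat_recl // big_add1 /=.
rewrite shifted_rising_at0 shifted_rising_at1 // mulr0 add0r.
under eq_bigr => i _ do rewrite !natz shifted_rising_atS //.
move/eqP; rewrite addr_eq0 => /eqP value_at0.
apply: (@mulfI _ (k`!%:Z)); first by rewrite eqz_nat -lt0n fact_gt0.
transitivity (- \sum_(0 <= i < k)
    (-1) ^+ i.+2 * 'C(k.+1, i.+2)%:Z * (k`! * 'C(n * i.+1 + k - 1, k))%N%:Z).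
  rewrite mulr_sumr -sumrN; apply: eq_bigr => i _.
  by rewrite !PoszM !exprS; ring.
by rewrite -value_at0 PoszM bin0 expr0 !mul1r mulrCA.
Qed.
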